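(* Let $V$ be any Gödel set, let $Q\bar x\,A(\bar x)$ be a prenex sentence with quantifier prefix $Q\bar x$ and quantifier-free matrix $A$, and let $\Gamma$ be a set of sentences not containing the Skolem symbols introduced below. Then $\Gamma\Vdash_V Q\bar x\,A(\bar x)$ if and only if $\Gamma\Vdash_V (Q\bar x\,A(\bar x))^S$.
   Context: A Gödel set is a closed set $V\subseteq[0,1]$ with $0,1\in V$. A $V$-interpretation $\mathcal I$ consists of a nonempty domain $U$, interpretations of constants and function symbols as usual, and for each $k$-ary predicate a function $U^k\to V$; with constants for elements of $U$ added, $\mathcal I(\bot)=0$, $\wedge,\vee$ are $\min,\max$, $\mathcal I(A\supset B)=1$ if $\mathcal I(A)\le\mathcal I(B)$ and $=\mathcal I(B)$ otherwise, $\mathcal I(\forall xA(x))=\inf_{u\in U}\mathcal I(A(u))$, $\mathcal I(\exists xA(x))=\sup_{u\in U}\mathcal I(A(u))$. For a set $\Gamma$ of sentences, $\Gamma\Vdash_V A$ means: every $V$-interpretation that gives value $1$ to all members of $\Gamma$ gives value $1$ to $A$. The validity Skolemization $(Q\bar x A)^S$ of a prenex sentence is obtained by deleting each universal quantifier $\forall y$ from the prefix and replacing $y$ in the matrix by $f(\bar z)$, where $f$ is a new function symbol (distinct for each such quantifier) and $\bar z$ is the list of existentially quantified variables preceding $\forall y$ in the prefix ($f$ is a new constant if $\bar z$ is empty). The result is purely existential. *)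

From HB Require Import structures.
From mathcomp Require Import all_boot all_order all_algebra.
From mathcomp Require Import all_classical all_reals all_analysis.
Set Implicit Arguments. Unset Strict Implicit. Unset Printing Implicit Defensive.
Import Order.TTheory GRing.Theory Num.Theory numFieldNormedType.Exports.
Local Open Scope classical_set_scope.

(* Symbols are
   applied to lists of arguments (arity given by the list length). ---------- *)

Inductive fo_term (F : Type) : Type :=
| Var : nat -> fo_term F
| App : F -> seq (fo_term F) -> fo_term F.
Arguments Var {F}.

Inductive fo_form (F P : Type) : Type :=
| Bot : fo_form F P
| Atom : P -> seq (fo_term F) -> fo_form F P
| And : fo_form F P -> fo_form F P -> fo_form F P
| Or  : fo_form F P -> fo_form F P -> fo_form F P
| Imp : fo_form F P -> fo_form F P -> fo_form F P
| All : fo_form F P -> fo_form F P   (* binds de Bruijn variable 0 *)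
| Ex  : fo_form F P -> fo_form F P.
Arguments Bot {F P}.

Section Syntax.
Variables F F' P : Type.

Fixpoint tsubst (F F' : Type) (s : nat -> fo_term F') (g : F -> F') (t : fo_term F) : fo_term F' :=
  match t with
  | Var i => s i
  | App f ts => App (g f) (map (@tsubst F F' s g) ts)
  end.

Definition tren (t : fo_term F') : fo_term F' := @tsubst F' F' (fun i => Var i.+1) id t.

Definition up (s : nat -> fo_term F') : nat -> fo_term F' :=
  fun n => match n with 0 => Var 0 | k.+1 => tren (s k) end.

Fixpoint fsubst (s : nat -> fo_term F') (g : F -> F') (A : fo_form F P) : fo_form F' P :=
  match A with
  | Bot => Bot
  | Atom p ts => Atom p (map (@tsubst F F' s g) ts)
  | And B C => And (fsubst s g B) (fsubst s g C)
  | Or B C => Or (fsubst s g B) (fsubst s g C)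
  | Imp B C => Imp (fsubst s g B) (fsubst s g C)
  | All B => All (fsubst (up s) g B)
  | Ex B => Ex (fsubst (up s) g B)
  end.
End Syntax.

Section Syntax2.
Variables F P : Type.

Definition fsym_map F' (g : F -> F') (A : fo_form F P) : fo_form F' P :=
  fsubst (fun i => Var i) g A.

Fixpoint tclosed (n : nat) (t : fo_term F) : bool :=
  match t with
  | Var i => (i < n)%N
  | App _ ts => all (tclosed n) ts
  end.

(* all free variables of A are < n ; closed_at 0 A means A is a sentence *)
Fixpoint closed_at (n : nat) (A : fo_form F P) : bool :=
  match A with
  | Bot => true
  | Atom _ ts => all (tclosed n) ts
  | And B C | Or B C | Imp B C => closed_at n B && closed_at n C
  | All B | Ex B => closed_at n.+1 B
  end.

Fixpoint qfree (A : fo_form F P) : bool :=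
  match A with
  | Bot | Atom _ _ => true
  | And B C | Or B C | Imp B C => qfree B && qfree C
  | All _ | Ex _ => false
  end.

(* Prenex formula: the prefix is listed outermost first,
   true = universal quantifier, false = existential quantifier. *)
Definition prenex (pre : seq bool) (A : fo_form F P) : fo_form F P :=
  foldr (fun (q : bool) B => if q then All B else Ex B) A pre.

(* ---------- Validity Skolemization ----------
   The Skolem symbols are inr p : F + nat, where p is the position in the
   prefix of the deleted universal quantifier.  It is applied to the list
   of existentially quantified variables preceding position p.            *)
Definition nex (pre : seq bool) : nat := count negb pre.
Definition rank (pre : seq bool) (p : nat) : nat := count negb (take p pre).

Definition skolem_sub (pre : seq bool) (i : nat) : fo_term (F + nat) :=
  let n := size pre in
  let m := nex pre in
  if (i < n)%N then
    let p := n - 1 - i in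
    if nth false pre p then
      App (inr p) (map (fun r => Var (m - 1 - r)) (iota 0 (rank pre p)))
    else Var (m - 1 - rank pre p)
  else Var (i - n + m).

End Syntax2.

Definition skolemize (F P : Type) (pre : seq bool) (A : fo_form F P) : fo_form (F + nat) P :=
  prenex (nseq (nex pre) false) (fsubst (@skolem_sub F pre) inl A).

Local Open Scope ring_scope.

Definition goedel_set (R : realType) (V : set R) : Prop :=
  closed V /\ (forall x, V x -> 0 <= x <= 1) /\ V 0 /\ V 1.

Record interp (R : realType) (F P : Type) := Interp {
  dom : Type;
  dom_elt : dom;                          (* the domain is nonempty *)
  ifun : F -> seq dom -> dom;
  ipred : P -> seq dom -> R }.

Definition valued_in (R : realType) F P (V : set R) (I : interp R F P) : Prop :=
  forall p us, V (@ipred R F P I p us).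

Definition scons (U : Type) (u : U) (rho : nat -> U) : nat -> U :=
  fun n => match n with 0 => u | k.+1 => rho k end.

Section Eval.
Variables (R : realType) (F P : Type) (I : interp R F P).

Fixpoint gteval (rho : nat -> @dom R F P I) (t : fo_term F) : @dom R F P I :=
  match t with
  | Var i => rho i
  | App f ts => @ifun R F P I f (map (gteval rho) ts)
  end.

Definition gimp (a b : R) : R := if a <= b then 1 else b.

Fixpoint geval (rho : nat -> @dom R F P I) (A : fo_form F P) : R :=
  match A with
  | Bot => 0
  | Atom p ts => @ipred R F P I p (map (gteval rho) ts)
  | And B C => Num.min (geval rho B) (geval rho C)
  | Or B C => Num.max (geval rho B) (geval rho C)
  | Imp B C => gimp (geval rho B) (geval rho C)
  | All B => inf (range (fun u => geval (scons u rho) B))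
  | Ex B => sup (range (fun u => geval (scons u rho) B))
  end.
End Eval.

Definition entails (R : realType) (F P : Type) (V : set R)
  (Gamma : set (fo_form F P)) (A : fo_form F P) : Prop :=
  forall I : interp R F P, @valued_in R F P V I ->
    (forall B, Gamma B -> forall rho, @geval R F P I rho B = 1) ->
    forall rho, @geval R F P I rho A = 1.

From HB Require Import structures.
From mathcomp Require Import all_boot all_order all_algebra.
From mathcomp Require Import all_classical all_reals all_analysis.
From mathcomp Require Import zify lra.
From Stdlib Require List.
Set Implicit Arguments. Unset Strict Implicit. Unset Printing Implicit Defensive.
Import Order.TTheory GRing.Theory Num.Theory.
Local Open Scope classical_set_scope.

(* The value of a prenex sentence is an iterated inf/sup, over tuples of domain elements, of the
   value of its matrix.  Interpreting the Skolem symbols by functions S picks, at each universal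
   quantifier, one point of the infimum, so the Skolemization never has a smaller value: if the
   prenex sentence has value 1, so does its Skolemization.  Conversely, suppose the prenex sentence
   has value g < 1 and fix g < c < 1.  An infimum below c has some point below c, and a
   supremum below c bounds all its points, so choosing such points at the universal quantifiers,
   as functions of the preceding existential witnesses, yields Skolem functions under which every
   instance of the matrix has value below c.  The Skolemization then has value at most c < 1,
   whereas Gamma, which contains no Skolem symbol, keeps value 1. *)

Section TermInduction.
Variables (F : Type) (Pt : fo_term F -> Prop).
Hypothesis Pt_Var : forall i, Pt (Var i).
Hypothesis Pt_App : forall f ts, List.Forall Pt ts -> Pt (App f ts).

Fixpoint fo_term_nested_ind (t : fo_term F) : Pt t :=
  match t with
  | Var i => Pt_Var i
  | App f ts => Pt_App f ((fix Forall_ind ts : List.Forall Pt ts :=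
      match ts with
      | [::] => List.Forall_nil Pt
      | t :: ts => List.Forall_cons t (fo_term_nested_ind t) (Forall_ind ts)
      end) ts)
  end.
End TermInduction.

Lemma eq_map_Forall (T U : Type) (f g : T -> U) (s : seq T) :
  List.Forall (fun x => f x = g x) s -> map f s = map g s.
Proof. by elim=> //= x s' -> _ ->. Qed.

Section Substitution.
Variables (R : realType) (P : Type).
Local Open Scope ring_scope.

Definition comap_interp (F F' : Type) (g : F -> F') (I : interp R F' P) : interp R F P :=
  Interp (dom_elt I) (fun f => @ifun _ _ _ I (g f)) (@ipred _ _ _ I).

Lemma gteval_tsubst (F F' : Type) (I : interp R F' P) (rho : nat -> dom I) s (g : F -> F') t :
  gteval rho (tsubst s g t) = gteval (I := comap_interp g I) (fun i => gteval rho (s i)) t.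
Proof.
elim/fo_term_nested_ind: t => //= f ts IH; congr ifun.
by rewrite -map_comp; apply: eq_map_Forall.
Qed.

Lemma gteval_tren (F : Type) (I : interp R F P) (rho : nat -> dom I) u t :
  gteval (scons u rho) (tren t) = gteval rho t.
Proof. by rewrite /tren gteval_tsubst; case: I rho u. Qed.

Lemma gteval_up (F F' : Type) (I : interp R F' P) (rho : nat -> dom I) (s : nat -> fo_term F') u :
  (fun i => gteval (scons u rho) (up s i)) = scons u (fun i => gteval rho (s i)).
Proof. by apply: funext => -[|i] //=; rewrite gteval_tren. Qed.

Lemma geval_fsubst (F F' : Type) (I : interp R F' P) (g : F -> F') (A : fo_form F P) :
  forall s (rho : nat -> dom I),
  geval rho (fsubst s g A) = geval (I := comap_interp g I) (fun i => gteval rho (s i)) A.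
Proof.
elim: A => //= [p ts|B IB C IC|B IB C IC|B IB C IC|B IB|B IB] s rho.
- by congr ipred; rewrite -map_comp; apply: eq_map => t; apply: gteval_tsubst.
- by rewrite IB IC.
- by rewrite IB IC.
- by rewrite IB IC.
- by apply: (congr1 (fun f => inf (range f))); apply: funext => u; rewrite IB gteval_up.
- by apply: (congr1 (fun f => sup (range f))); apply: funext => u; rewrite IB gteval_up.
Qed.

End Substitution.

Section RangeBounds.
Variables (R : realType) (D : Type) (d : D).
Local Open Scope ring_scope.

Lemma inf_range_le (f : D -> R) b u : (forall v, b <= f v) -> inf (range f) <= f u.
Proof. by move=> fb; apply: ge_inf; [exists b => _ [v _ <-]|exists u]. Qed.

Lemma le_inf_range (f : D -> R) c : (forall u, c <= f u) -> c <= inf (range f).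
Proof. by move=> fc; apply: lb_le_inf; [exists (f d), d|move=> _ [v _ <-]]. Qed.

Lemma le_sup_range (f : D -> R) b u : (forall v, f v <= b) -> f u <= sup (range f).
Proof. by move=> fb; apply: ub_le_sup; [exists b => _ [v _ <-]|exists u]. Qed.

Lemma sup_range_le (f : D -> R) c : (forall u, f u <= c) -> sup (range f) <= c.
Proof. by move=> fc; apply: ge_sup; [exists (f d), d|move=> _ [v _ <-]]. Qed.

Lemma inf_range_in01 (f : D -> R) : (forall u, 0 <= f u <= 1) -> 0 <= inf (range f) <= 1.
Proof.
move=> f01; have f0 u : 0 <= f u by case/andP: (f01 u).
rewrite le_inf_range //=; apply: le_trans (inf_range_le d f0) _.
by case/andP: (f01 d).
Qed.

Lemma sup_range_in01 (f : D -> R) : (forall u, 0 <= f u <= 1) -> 0 <= sup (range f) <= 1.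
Proof.
move=> f01; have f1 u : f u <= 1 by case/andP: (f01 u).
rewrite sup_range_le // andbT; apply: le_trans _ (le_sup_range d f1).
by case/andP: (f01 d).
Qed.

End RangeBounds.

Definition skolem_expansion (R : realType) (F P : Type) (I : interp R F P)
    (S : nat -> seq (dom I) -> dom I) : interp R (F + nat) P :=
  Interp (dom_elt I) (fun f => match f with inl f => @ifun _ _ _ I f | inr p => S p end)
    (@ipred _ _ _ I).
Arguments skolem_expansion {R F P} I S.

Section SkolemExpansion.
Variables (R : realType) (F P : Type).
Local Open Scope ring_scope.

Lemma skolem_expansion_comap (J : interp R (F + nat) P) :
  J = skolem_expansion (comap_interp inl J) (fun p => @ifun _ _ _ J (inr p)).
Proof. by case: J => D d f p; rewrite /skolem_expansion; f_equal; apply: funext => -[]. Qed.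

Lemma geval_comap_skolem_expansion (I : interp R F P) S (rho : nat -> dom I) A :
  geval (I := comap_interp inl (skolem_expansion I S)) rho A = geval rho A.
Proof. by case: I S rho. Qed.

Lemma geval_fsym_map (I : interp R F P) S (rho : nat -> dom I) A :
  geval (I := skolem_expansion I S) rho (fsym_map inl A) = geval rho A.
Proof. by rewrite /fsym_map geval_fsubst geval_comap_skolem_expansion. Qed.

Lemma geval_in01 (V : set R) (I : interp R F P) :
  (forall x, V x -> 0 <= x <= 1) -> valued_in V I ->
  forall (rho : nat -> dom I) A, 0 <= geval rho A <= 1.
Proof.
move=> V01 IV rho A; elim: A rho => /= [|p ts|B IB C IC|B IB C IC|B IB C IC|B IB|B IB] rho.
- by rewrite lexx ler01.
- exact/V01/IV.
- by move: (IB rho) (IC rho) => /andP[b0 b1] /andP[c0 c1]; rewrite le_min b0 c0 ge_min b1.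
- by move: (IB rho) (IC rho) => /andP[b0 b1] /andP[c0 c1]; rewrite le_max b0 ge_max b1 c1.
- move: (IB rho) (IC rho) => /andP[b0 b1] /andP[c0 c1].
  by rewrite /gimp; case: ifP; rewrite ?lexx ?ler01 ?c0 ?c1.
- exact: (inf_range_in01 (dom_elt I) (fun u => IB (scons u rho))).
- exact: (sup_range_in01 (dom_elt I) (fun u => IB (scons u rho))).
Qed.
End SkolemExpansion.

Lemma rank_le_nex pre p : (rank pre p <= nex pre)%N.
Proof. by rewrite /rank /nex -{2}(cat_take_drop p pre) count_cat leq_addr. Qed.

Lemma rank_lt_nex pre p : (p < size pre)%N -> ~~ nth false pre p -> (rank pre p < nex pre)%N.
Proof.
move=> hp hn; rewrite /rank /nex -{2}(cat_take_drop p pre) count_cat.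
by rewrite (drop_nth false hp) /= hn /= addnS ltnS leq_addr.
Qed.

Section PrefixEvaluation.
Variables (R : realType) (D : Type) (d : D).
Local Open Scope ring_scope.

Fixpoint scons_seq (x : seq D) (rho : nat -> D) : nat -> D :=
  if x is u :: x then scons_seq x (scons u rho) else rho.

Lemma scons_seqE x rho i : scons_seq x rho i =
  if (i < size x)%N then nth d x (size x - 1 - i) else rho (i - size x)%N.
Proof.
elim: x rho i => [|u x IH] rho i /=; first by rewrite subn0.
rewrite IH subSS subn0; case: ltnP => hi.
  have -> : (size x - i = (size x - 1 - i).+1)%N by lia.
  by rewrite ltnS ltnW.
case: ltnP => hi2.
  have -> : i = size x by lia.
  by rewrite subnn.
by have -> : (i - size x = (i - (size x).+1).+1)%N by lia.
Qed.

Fixpoint qeval (pre : seq bool) (h : seq D -> R) : R :=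
  match pre with
  | [::] => h [::]
  | q :: pre => if q then inf (range (fun u => qeval pre (fun e => h (u :: e))))
                else sup (range (fun u => qeval pre (fun e => h (u :: e))))
  end.

Definition valued01 (h : seq D -> R) := forall e, 0 <= h e <= 1.

Lemma qeval_in01 pre h : valued01 h -> 0 <= qeval pre h <= 1.
Proof.
elim: pre h => [|[] pre IH] h hb /=; first exact: hb.
- exact: (inf_range_in01 d (fun u => IH _ (fun e => hb (u :: e)))).
- exact: (sup_range_in01 d (fun u => IH _ (fun e => hb (u :: e)))).
Qed.

Lemma qeval_ge0 pre h : valued01 h -> 0 <= qeval pre h.
Proof. by move/(qeval_in01 pre)/andP=> []. Qed.

Lemma qeval_le1 pre h : valued01 h -> qeval pre h <= 1.
Proof. by move/(qeval_in01 pre)/andP=> []. Qed.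

Lemma eq_qeval pre h h' :
  (forall e, size e = size pre -> h e = h' e) -> qeval pre h = qeval pre h'.
Proof.
elim: pre h h' => [|q pre IH] h h' hh' /=; first exact: hh'.
suff -> : (fun u => qeval pre (fun e => h (u :: e))) =
          (fun u => qeval pre (fun e => h' (u :: e))) by [].
by apply: funext => u; apply: IH => e He; apply: hh'; rewrite /= He.
Qed.

Lemma qeval_le pre h c : valued01 h ->
  (forall e, size e = size pre -> h e <= c) -> qeval pre h <= c.
Proof.
elim: pre h => [|q pre IH] h hb hc /=; first exact: hc.
have hc' u : qeval pre (fun e => h (u :: e)) <= c.
  by apply: IH => [e|e He]; [exact: hb|apply: hc; rewrite /= He].
case: q {hc}; last exact: sup_range_le.
apply: le_trans (inf_range_le (b := 0) d _) (hc' d) => u.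
by apply: qeval_ge0 => e; apply: hb.
Qed.


(* [skolem_tuple pre S k E e] assigns values to the variables of the prefix [pre], whose first
   quantifier sits at position [k] of the whole prefix: the existential variables take the values
   listed in [e], and the universal variable at position [j] takes the value [S j E'], where [E']
   lists the values of all earlier existential variables ([E] being those before position [k]). *)
Fixpoint skolem_tuple (pre : seq bool) (S : nat -> seq D -> D) (k : nat) (E e : seq D) :
    seq D :=
  match pre with
  | [::] => [::]
  | q :: pre => if q then S k E :: skolem_tuple pre S k.+1 E e
                else head d e :: skolem_tuple pre S k.+1 (rcons E (head d e)) (behead e)
  end.

Lemma size_skolem_tuple pre S k E e : size (skolem_tuple pre S k E e) = size pre.
Proof. by elim: pre k E e => [|[] pre IH] k E e //=; rewrite IH. Qed.

Lemma eq_skolem_tuple pre S S' k E e :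
  (forall j E', (k <= j)%N -> S j (E ++ E') = S' j (E ++ E')) ->
  skolem_tuple pre S k E e = skolem_tuple pre S' k E e.
Proof.
elim: pre k E e => [|[] pre IH] k E e SS' //=.
- have := SS' k [::] (leqnn k); rewrite cats0 => ->.
  by rewrite (IH k.+1 E e) // => j E' hj; apply: SS'; lia.
- rewrite (IH k.+1 (rcons E (head d e)) (behead e)) // => j E' hj.
  by rewrite cat_rcons; apply: SS'; lia.
Qed.

Lemma nth_skolem_tuple pre S k E e j : size e = nex pre -> (j < size pre)%N ->
  nth d (skolem_tuple pre S k E e) j =
  if nth false pre j then S (k + j)%N (E ++ take (rank pre j) e)
  else nth d e (rank pre j).
Proof.
rewrite /nex /rank.
elim: pre k E e j => [|[] pre IH] k E e j //= He hj.
- case: j hj => [|j] hj /=; first by rewrite addn0 take0 cats0.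
  by rewrite IH // addSnnS.
- case: e He => [//|u e] /= He.
  case: j hj => [|j] hj //=.
  by rewrite IH ?add0n ?addSnnS ?cat_rcons //; move: He; rewrite add1n => -[].
Qed.

Lemma qeval_le_skolem pre S h k E : valued01 h ->
  qeval pre h <= qeval (nseq (nex pre) false) (fun e => h (skolem_tuple pre S k E e)).
Proof.
rewrite /nex.
elim: pre h k E => [|[] pre IH] h k E hb //=; rewrite add0n.
- apply: le_trans (inf_range_le (b := 0) (S k E) _) (IH _ k.+1 E (fun e => hb _)) => u.
  by apply: qeval_ge0 => e; apply: hb.
- apply: (sup_range_le d) => u; apply: le_trans (IH _ k.+1 (rcons E u) (fun e => hb _)) _.
  apply: le_trans _ (le_sup_range (b := 1) u _) => // v.
  by apply: qeval_le1 => e; apply: hb.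
Qed.

Lemma exists_skolem_lt pre c h k E : valued01 h -> qeval pre h < c ->
  exists S, forall e, size e = nex pre -> h (skolem_tuple pre S k E e) < c.
Proof.
rewrite /nex.
elim: pre h k E => [|[] pre IH] h k E hb /= hc.
- by exists (fun _ _ => d).
- have [_ [u _ <-] hu] := inf_lt (ex_intro _ _ (ex_intro2 _ _ d I erefl)) hc.
  have [S hS] := IH _ k.+1 E (fun e => hb _) hu.
  exists (fun j E' => if j == k then u else S j E') => e He.
  rewrite eqxx (@eq_skolem_tuple pre _ S); first exact: hS.
  by move=> j E' hj; have -> : (j == k) = false by apply/eqP; lia.
- have hu u : qeval pre (fun e => h (u :: e)) < c.
    apply: le_lt_trans hc; apply: le_trans _ (le_sup_range (b := 1) u _) => // v.
    by apply: qeval_le1 => e; apply: hb.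
  have [S hS] := choice (fun u => IH _ k.+1 (rcons E u) (fun e => hb _) (hu u)).
  (* the witness for the existential variable at this position is the entry [size E] of the
     argument list, so it determines which family [S u] of Skolem functions to use *)
  exists (fun j E' => S (nth d E' (size E)) j E') => -[|u e] //.
  rewrite add1n => -[He] /=.
  rewrite (@eq_skolem_tuple pre _ (S u)); first exact: hS.
  by move=> j E' hj; rewrite cat_rcons nth_cat ltnn subnn.
Qed.

End PrefixEvaluation.

Lemma geval_prenex (R : realType) (F P : Type) (I : interp R F P) pre B (rho : nat -> dom I) :
  geval rho (prenex pre B) = qeval pre (fun e => geval (scons_seq e rho) B).
Proof.
elim: pre rho => [|[] pre IH] rho //=.
- exact: (congr1 (fun f => inf (range f)) (funext (fun u => IH _))).
- exact: (congr1 (fun f => sup (range f)) (funext (fun u => IH _))).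
Qed.

Section Skolemization.
Variables (R : realType) (F P : Type).
Local Open Scope ring_scope.

Lemma scons_seq_skolem_tuple (I : interp R F P) S pre (e : seq (dom I)) (rho : nat -> dom I) i :
  size e = nex pre ->
  scons_seq (skolem_tuple (dom_elt I) pre S 0 [::] e) rho i =
  gteval (I := skolem_expansion I S) (scons_seq e rho) (skolem_sub F pre i).
Proof.
move=> He; rewrite /skolem_sub (scons_seqE (dom_elt I)) size_skolem_tuple.
case: ltnP => hi; last first.
  rewrite /= (scons_seqE (dom_elt I)) He.
  have -> : (i - size pre + nex pre < nex pre)%N = false by lia.
  by rewrite addnK.
have hp : (size pre - 1 - i < size pre)%N by lia.
rewrite (nth_skolem_tuple _ _ _ _ He hp).
have rl := rank_le_nex pre (size pre - 1 - i).
case: ifP => hq /=.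
- rewrite -map_comp -(map_nth_iota0 (dom_elt I)) ?He //.
  congr (S _ _); apply/eq_in_map => j; rewrite mem_iota => /andP[_ hj] /=.
  rewrite (scons_seqE (dom_elt I)) He.
  have -> : (nex pre - 1 - j < nex pre)%N by lia.
  congr nth; lia.
- have rt := rank_lt_nex hp (negbT hq).
  rewrite (scons_seqE (dom_elt I)) He.
  have -> : (nex pre - 1 - rank pre (size pre - 1 - i) < nex pre)%N by lia.
  congr nth; lia.
Qed.

Lemma geval_skolemize (I : interp R F P) S pre A (rho : nat -> dom I) :
  geval (I := skolem_expansion I S) rho (skolemize pre A) =
  qeval (nseq (nex pre) false)
    (fun e => geval (scons_seq (skolem_tuple (dom_elt I) pre S 0 [::] e) rho) A).
Proof.
rewrite /skolemize geval_prenex; apply: eq_qeval => e; rewrite size_nseq => He.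
rewrite geval_fsubst geval_comap_skolem_expansion; congr geval.
by apply: funext => i; rewrite scons_seq_skolem_tuple.
Qed.

Variables (V : set R) (Gamma : set (fo_form F P)) (pre : seq bool) (A : fo_form F P).
Hypothesis V01 : forall x, V x -> 0 <= x <= 1.

Lemma entails_skolemize :
  entails V Gamma (prenex pre A) ->
  entails V [set fsym_map inl B | B in Gamma] (skolemize pre A).
Proof.
move=> GA J; rewrite (skolem_expansion_comap J).
set I := comap_interp inl J; set S := fun p => @ifun _ _ _ J (inr p).
move=> IV SGamma rho; have {}IV : valued_in V I := IV.
have IGamma B : Gamma B -> forall rho, geval (I := I) rho B = 1.
  by move=> GB rho'; rewrite -(geval_fsym_map (I := I) S); apply: SGamma; exists B.
have := GA I IV IGamma rho; rewrite geval_prenex geval_skolemize => {}GA.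
have hb : valued01 (fun e => geval (I := I) (scons_seq e rho) A).
  by move=> e; exact: (geval_in01 V01 IV _ _).
apply/eqP; rewrite eq_le (qeval_le1 (dom_elt I)) /=; last by move=> e; exact: hb.
by rewrite -GA qeval_le_skolem.
Qed.

Lemma skolemize_entails :
  entails V [set fsym_map inl B | B in Gamma] (skolemize pre A) ->
  entails V Gamma (prenex pre A).
Proof.
move=> SA I IV IGamma rho; rewrite geval_prenex.
set h := fun e => geval (scons_seq e rho) A.
have hb : valued01 h by move=> e; exact: (geval_in01 V01 IV _ _).
apply/eqP; rewrite eq_le (qeval_le1 (dom_elt I)) //= leNgt; apply/negP => h_lt1.
pose c := (qeval pre h + 1) / 2.
have hc : qeval pre h < c by rewrite /c; lra.
have c_lt1 : c < 1 by rewrite /c; lra.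
have [S hS] := exists_skolem_lt (dom_elt I) 0 [::] hb hc.
have SGamma B : [set fsym_map inl B | B in Gamma] B ->
    forall rho, geval (I := skolem_expansion I S) rho B = 1.
  by move=> [B' GB' <-] rho'; rewrite geval_fsym_map; exact: IGamma.
have := SA (skolem_expansion I S) IV SGamma rho; rewrite geval_skolemize => S_one.
suff : (1 : R) <= c by rewrite leNgt c_lt1.
rewrite -S_one; apply: (qeval_le (dom_elt I)) => [e|e]; first exact: hb.
by rewrite size_nseq => He; exact/ltW/hS.
Qed.

End Skolemization.

Theorem lemma4p1 (R : realType) (V : set R) (F P : Type)
  (pre : seq bool) (A : fo_form F P) (Gamma : set (fo_form F P)) :
  goedel_set V ->
  qfree A -> closed_at (size pre) A ->
  (forall B, Gamma B -> closed_at 0 B) ->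
  entails V Gamma (prenex pre A) <->
  entails V [set fsym_map inl B | B in Gamma] (skolemize pre A).
Proof.
move=> [_ [V01 _]] _ _ _.
split; [exact: (entails_skolemize V01) | exact: (skolemize_entails V01)].
Qed.
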